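(* For any generalized connection $D$ and compatible $E$-connection $D^{S}$, the operator \begin{equation*} d\!\!\!/ = D\!\!\!\!/^{\,S} + \frac14 \gamma_T \end{equation*} satisfies conditions (i) $[[d\!\!\!/,f],\gamma_e]=\pi(e)(f)$ and (ii) $[[d\!\!\!/,\gamma_{e_1}],\gamma_{e_2}]=\gamma_{[e_1,e_2]}$ for all $f\in C^\infty(M)$, $e,e_1,e_2\in\Gamma(E)$. Here $T \in \Gamma(\wedge^3E^* )\cong \Gamma(\wedge^3E)\subset \Gamma (\mathrm{Cl}(E))$ denotes the torsion of $D$.
   Context: Let $E\to M$ be an oriented Courant algebroid with anchor $\pi:E\to TM$, Dorfman bracket $[\cdot,\cdot]$ and scalar product $\langle\cdot,\cdot\rangle$ of neutral signature, and $S$ a bundle of irreducible $\mathrm{Cl}(E)$-modules (Clifford relation $e^2=\langle e,e\rangle$) with action $a\mapsto\gamma_a$; $[\cdot,\cdot]$ on operators is the super commutator $[A,B]=AB-(-1)^{\deg A\deg B}BA$. A generalized connection is an $\mathbb R$-linear $D:\Gamma(E)\to\Gamma(E^*\otimes E)$ with $D_e(fv)=\pi(e)(f)v+fD_ev$, compatible with $\langle\cdot,\cdot\rangle$; its torsion $T(u,v)=D_uv-D_vu-[u,v]+(Du)^*v$ is a 3-form $T(u,v,w)=\langle T(u,v),w\rangle$, identified with an element of $\wedge^3E\subset\mathrm{Cl}(E)$ via $E\cong E^*$. An $E$-connection $D^S$ on $S$ is compatible with $D$ if $D^S_e(as)=(D_ea)s+aD^S_es$. The Dirac operator is $D\!\!\!\!/^{\,S}=\frac12\sum_{i}\tilde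 e_iD^S_{e_i}$, with $(e_i)$ a local frame of $E$ and $(\tilde e_i)$ the metrically dual frame, $\langle e_i,\tilde e_j\rangle=\delta_{ij}$. *)

(* Algebraic (Serre-Swan style) model of the data:
   A  = ring of smooth functions C^oo(M) (a commutative R-algebra, R = reals),
   E  = Gamma(E), S = Gamma(S) as A-modules. *)
From HB Require Import structures.
From mathcomp Require Import all_boot all_order all_algebra.
From mathcomp Require Import reals.
Set Implicit Arguments. Unset Strict Implicit. Unset Printing Implicit Defensive.
Import Order.TTheory GRing.Theory Num.Theory.
Local Open Scope ring_scope.

Section Defs.
Variables (R : realType) (A : comAlgType R).

(* a vector field = an R-linear derivation of A *)
Definition derivation (X : A -> A) : Prop :=
  [/\ forall f g, X (f + g) = X f + X g,
      forall (r : R) f, X (r *: f) = r *: X f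
    & forall f g, X (f * g) = f * X g + X f * g].

Variable (E : lmodType A).

(* Courant algebroid (Dorfman bracket br, anchor pi, scalar product ip) *)
Record courant (pi : E -> A -> A) (br : E -> E -> E) (ip : E -> E -> A) : Prop := {
  ip_sym : forall u v, ip u v = ip v u;
  ip_linl : forall f u v w, ip (f *: u + v) w = f * ip u w + ip v w;
  ip_nondeg : forall u, (forall v, ip u v = 0) -> u = 0;
  pi_der : forall e, derivation (pi e);
  pi_linl : forall f u v g, pi (f *: u + v) g = f * pi u g + pi v g;
  br_addl : forall u v w, br (u + v) w = br u w + br v w;
  br_addr : forall u v w, br u (v + w) = br u v + br u w;
  br_leibniz : forall u v f, br u (f *: v) = f *: br u v + pi u f *: v;
  br_jacobi : forall u v w, br u (br v w) = br (br u v) w + br v (br u w);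
  br_ip : forall u v w, pi u (ip v w) = ip (br u v) w + ip v (br u w);
  br_sym : forall u v w, ip (br u v + br v u) w = pi w (ip u v)
}.

(* generalized connection D : Gamma(E) -> Gamma(E^* (x) E), D u v = D_u v *)
Record gen_connection (pi : E -> A -> A) (ip : E -> E -> A) (D : E -> E -> E) : Prop := {
  gc_linl : forall f u v w, D (f *: u + v) w = f *: D u w + D v w;
  gc_addr : forall e u v, D e (u + v) = D e u + D e v;
  gc_leibniz : forall e f v, D e (f *: v) = pi e f *: v + f *: D e v;
  gc_metric : forall e u v, pi e (ip u v) = ip (D e u) v + ip u (D e v)
}.

(* torsion as a 3-form:
   T(u,v,w) = < D_u v - D_v u - [u,v] + (Du)^* v , w >, with <(Du)^* v, w> = <D_w u, v> *)
Definition torsion3 (br : E -> E -> E) (ip : E -> E -> A) (D : E -> E -> E)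
  (u v w : E) : A := ip (D u v - D v u - br u v) w + ip (D w u) v.

Definition dual_frame (ip : E -> E -> A) (n : nat) (e et : 'I_n -> E) : Prop :=
  forall v, v = \sum_(i < n) ip (et i) v *: e i.

Variable (S : lmodType A).

Record clifford_module (ip : E -> E -> A) (gam : E -> S -> S) : Prop := {
  cm_lin_e : forall f u v s, gam (f *: u + v) s = f *: gam u s + gam v s;
  cm_lin_s : forall e f s t, gam e (f *: s + t) = f *: gam e s + gam e t;
  cm_clifford : forall e s, gam e (gam e s) = ip e e *: s
}.

Record e_connection (pi : E -> A -> A) (DS : E -> S -> S) : Prop := {
  ec_linl : forall f u v s, DS (f *: u + v) s = f *: DS u s + DS v s;
  ec_addr : forall e s t, DS e (s + t) = DS e s + DS e t;
  ec_leibniz : forall e f s, DS e (f *: s) = pi e f *: s + f *: DS e s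
}.

Definition compatible (gam : E -> S -> S) (D : E -> E -> E) (DS : E -> S -> S) : Prop :=
  forall e a s, DS e (gam a s) = gam (D e a) s + gam a (DS e s).

Definition dirac (gam : E -> S -> S) (DS : E -> S -> S) (n : nat) (e et : 'I_n -> E)
  (s : S) : S := ((2 : R)^-1)%:A *: \sum_(i < n) gam (et i) (DS (e i) s).

(* Clifford action of the 3-form T, via T in wedge^3 E* = wedge^3 E in Cl(E):
   gamma_T = (1/6) sum_{i,j,k} T(e_i,e_j,e_k) et_i et_j et_k *)
Definition gammaT (br : E -> E -> E) (ip : E -> E -> A) (D : E -> E -> E)
  (gam : E -> S -> S) (n : nat) (e et : 'I_n -> E) (s : S) : S :=
  ((6 : R)^-1)%:A *: \sum_(i < n) \sum_(j < n) \sum_(k < n)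
     torsion3 br ip D (e i) (e j) (e k) *: gam (et i) (gam (et j) (gam (et k) s)).

Definition dslash br ip D gam DS n (e et : 'I_n -> E) (s : S) : S :=
  dirac gam DS e et s + ((4 : R)^-1)%:A *: gammaT br ip D gam e et s.

(* super commutator of operators of parities pa, pb (true = odd) *)
Definition scomm (pa pb : bool) (P Q : S -> S) : S -> S :=
  fun s => P (Q s) - ((-1 : A) ^+ (pa && pb)) *: Q (P s).

Definition mulop (f : A) : S -> S := fun s => f *: s.

End Defs.

(* Everything is computed from the Clifford relation in its polarised form
   gam a gam b + gam b gam a = 2 <a, b> and from the frame expansion
   x = sum_i <et_i, x> e_i.
   (i) The cubic term gamma_T is C^oo(M)-linear, so [d, f] = 1/2 gam (grad f) with
   grad f = sum_i pi(e_i)(f) et_i, whose anticommutator with gam x is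
   <grad f, x> = pi(x)(f).
   (ii) The Courant axioms and metric compatibility of D make T totally
   antisymmetric.  Hence {gamma_T, gam x} = sum_ij T(x, e_i, e_j) et_i et_j and
   [{gamma_T, gam x}, gam y] = -4 gam (T(x, y, .)), while compatibility of D^S
   with D gives [{Dirac, gam x}, gam y] = gam (D_x y - D_y x + <D_. x, y>).
   As T(x, y, .) = D_x y - D_y x - [x, y] + <D_. x, y>, the weight 1/4 leaves
   exactly gam [x, y]. *)

From Pilot Require Import Defs.
From HB Require Import structures.
From mathcomp Require Import all_boot all_order all_algebra.
From mathcomp Require Import reals.
From mathcomp Require Import ring.
Set Implicit Arguments.
Unset Strict Implicit.
Unset Printing Implicit Defensive.
Import Order.TTheory GRing.Theory Num.Theory.
Local Open Scope ring_scope.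

Section LinearFor.
Context {K : pzRingType} {U : lmodType K} {V : zmodType} {s : GRing.Scale.law K V}.
Context {f : U -> V} (f_lin : linear_for s f).

Let fL : {linear U -> V | s} := HB.pack f (GRing.isLinear.Build K U V s f f_lin).

Lemma linD : {morph f : u v / u + v}. Proof. exact: (linearD fL). Qed.
Lemma linB : {morph f : u v / u - v}. Proof. exact: (linearB fL). Qed.
Lemma linZ a u : f (a *: u) = s a (f u). Proof. exact: (linearZ_LR fL). Qed.
Lemma lin_sum I r (P : pred I) (F : I -> U) :
  f (\sum_(i <- r | P i) F i) = \sum_(i <- r | P i) f (F i).
Proof. exact: (linear_sum fL). Qed.

End LinearFor.

Section CourantDirac.
Variables (R : realType) (A : comAlgType R).

Lemma scale_invnK (V : lmodType A) k (v : V) : (0 < k)%N ->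
  ((k%:R : R)^-1)%:A *: (v *+ k) = v.
Proof.
move=> k_gt0; rewrite -scalerMnr scalerMnl.
have -> : ((k%:R : R)^-1)%:A *+ k = 1 :> A.
  by rewrite scalerMnl -mulr_natr mulVf ?pnatr_eq0 -?lt0n // scale1r.
exact: scale1r.
Qed.

Section SuperCommutator.
Variable S : lmodType A.
Implicit Types (P Q g : S -> S) (s : S).

Lemma scomm_odd P Q s : scomm true true P Q s = P (Q s) + Q (P s).
Proof. by rewrite /scomm expr1 scaleN1r opprK. Qed.

Lemma scomm_even pa pb P Q s : ~~ (pa && pb) -> scomm pa pb P Q s = P (Q s) - Q (P s).
Proof. by rewrite /scomm => /negbTE ->; rewrite expr0 scale1r. Qed.

Lemma double_scomm_addZ P Q (c : A) g h s : linear g -> linear h ->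
  scomm false true (scomm true true (fun t => P t + c *: Q t) h) g s =
  scomm false true (scomm true true P h) g s
  + c *: scomm false true (scomm true true Q h) g s.
Proof.
move=> g_lin h_lin; rewrite !(scomm_even (pa := false)) // !scomm_odd.
rewrite !(linD h_lin) !(linZ h_lin) /= !(linD g_lin) !(linZ g_lin) /=.
rewrite (addrACA (P _)) (addrACA (g (P _))) opprD (addrACA (_ + _) _ (- _)).
by rewrite -!scalerDr -scalerBr.
Qed.

End SuperCommutator.

Section Frame.
Variables (E : lmodType A) (ip : E -> E -> A) (n : nat) (e et : 'I_n -> E).
Hypothesis frame : dual_frame ip e et.

Lemma frame_contract (V : zmodType) (s : GRing.Scale.law A V) (phi : E -> V) x :
  linear_for s phi -> \sum_(i < n) s (ip (et i) x) (phi (e i)) = phi x.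
Proof.
move=> phi_lin; rewrite [in RHS](frame x) (lin_sum phi_lin).
by apply: eq_bigr => i _; rewrite (linZ phi_lin).
Qed.

End Frame.

Section Courant.
Variables (E : lmodType A) (pi : E -> A -> A) (br : E -> E -> E) (ip : E -> E -> A).
Hypothesis Ecourant : courant pi br ip.

Lemma ip_scalarl w : scalar (ip^~ w).
Proof. by move=> a u v; rewrite (ip_linl Ecourant). Qed.

Lemma ip_scalarr w : scalar (ip w).
Proof. by move=> a u v; rewrite !(ip_sym Ecourant w) (ip_linl Ecourant). Qed.

Lemma anchor_scalar g : scalar (pi^~ g).
Proof. by move=> a u v; rewrite (pi_linl Ecourant). Qed.

Variables (n : nat) (e et : 'I_n -> E).
Hypothesis frame : dual_frame ip e et.

Lemma dual_frame_expand v : v = \sum_(i < n) ip (e i) v *: et i.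
Proof.
apply/eqP; rewrite -subr_eq0; apply/eqP; apply: (ip_nondeg Ecourant) => w.
rewrite (linB (ip_scalarl w)) (lin_sum (ip_scalarl w)) /=.
rewrite -(frame_contract frame w (ip_scalarr v)) -sumrB big1 // => i _.
by rewrite (linZ (ip_scalarl w)) /= (ip_sym Ecourant v) mulrC subrr.
Qed.

Definition grad (f : A) : E := \sum_(i < n) pi (e i) f *: et i.

Lemma ip_grad f x : ip (grad f) x = pi x f.
Proof.
rewrite /grad (lin_sum (ip_scalarl x)) -(frame_contract frame x (anchor_scalar f)).
by apply: eq_bigr => i _; rewrite (linZ (ip_scalarl x)) /= (ip_sym Ecourant) mulrC.
Qed.

Section Torsion.
Variable D : E -> E -> E.
Hypothesis Dconnection : gen_connection pi ip D.
Local Notation T := (torsion3 br ip D).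

Lemma connection_linl w : linear (D^~ w).
Proof. by move=> a u v; rewrite (gc_linl Dconnection). Qed.

Lemma torsion3_scalar u v : scalar (T u v).
Proof.
move=> a w w'; rewrite /torsion3 (ip_scalarr _ a) (gc_linl Dconnection) (ip_linl Ecourant).
ring.
Qed.

Lemma torsion3_swap23 u v w : T u w v = - T u v w.
Proof.
have bracket_skew := br_ip Ecourant u v w.
have metric := gc_metric Dconnection u v w.
rewrite /torsion3 !(linB (ip_scalarl _)) !(ip_sym Ecourant v) in bracket_skew metric *.
have -> : ip (D u w) v = pi u (ip w v) - ip (D u v) w.
  by rewrite metric addrAC subrr add0r.
have -> : ip (br u w) v = pi u (ip w v) - ip (br u v) w.
  by rewrite bracket_skew addrAC subrr add0r.
ring.
Qed.

Lemma torsion3_swap12 u v w : T v u w = - T u v w.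
Proof.
have bracket_sym := br_sym Ecourant u v w.
have metric := gc_metric Dconnection w u v.
rewrite /torsion3 !(linB (ip_scalarl _)) (linD (ip_scalarl _)) (ip_sym Ecourant u (D w v))
  in bracket_sym metric *.
have -> : ip (D w v) u = pi w (ip u v) - ip (D w u) v.
  by rewrite metric addrAC subrr add0r.
have -> : ip (br v u) w = pi w (ip u v) - ip (br u v) w.
  by rewrite -bracket_sym addrAC subrr add0r.
ring.
Qed.

Lemma torsion3_cycle u v w : T u v w = T v w u.
Proof. by rewrite (torsion3_swap23 v) torsion3_swap12. Qed.

Lemma torsion3_frame_expand x y :
  \sum_(i < n) T x y (e i) *: et i =
  D x y - D y x - br x y + \sum_(i < n) ip (D (e i) x) y *: et i.
Proof.
rewrite [in RHS](dual_frame_expand (D x y - D y x - br x y)) -big_split; apply: eq_bigr => i _.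
by rewrite /torsion3 scalerDl (ip_sym Ecourant (e i)).
Qed.

End Torsion.
End Courant.

Section Clifford.
Variables (E S : lmodType A) (ip : E -> E -> A) (gam : E -> S -> S).
Hypotheses (ipC : forall u v, ip u v = ip v u) (ip_lin : forall w, scalar (ip^~ w)).
Hypothesis Sclifford : clifford_module ip gam.

Lemma gam_linl s : linear (gam^~ s).
Proof. by move=> a u v; rewrite (cm_lin_e Sclifford). Qed.

Lemma gam_linr x : linear (gam x).
Proof. by move=> a s t; rewrite (cm_lin_s Sclifford). Qed.

Lemma clifford_anticomm a b s : gam a (gam b s) + gam b (gam a s) = (ip a b *+ 2) *: s.
Proof.
rewrite mulr2n; have := cm_clifford Sclifford (a + b) s.
rewrite !(linD (gam_linl _)) !(linD (gam_linr _)) !(cm_clifford Sclifford).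
rewrite !(linD (ip_lin _)) ![ip _ (a + b)]ipC !(linD (ip_lin _)) (ipC b a) !scalerDl.
by rewrite !addrA => /addIr; rewrite -!addrA => /addrI.
Qed.

Lemma clifford_anticomm_swap a b s :
  gam a (gam b s) = (ip a b *+ 2) *: s - gam b (gam a s).
Proof. by rewrite -clifford_anticomm addrK. Qed.

Lemma clifford_comm2 a b c s : gam a (gam b (gam c s)) - gam c (gam a (gam b s)) =
  (ip b c *+ 2) *: gam a s - (ip a c *+ 2) *: gam b s.
Proof.
rewrite (clifford_anticomm_swap b c) (linB (gam_linr _)) (linZ (gam_linr _)) /=.
by rewrite (clifford_anticomm_swap a c) opprB addrA addrAC addrK.
Qed.

Lemma clifford_anticomm3 a b c x s :
  gam a (gam b (gam c (gam x s))) + gam x (gam a (gam b (gam c s))) =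
  (ip c x *+ 2) *: gam a (gam b s) - (ip b x *+ 2) *: gam a (gam c s)
  + (ip a x *+ 2) *: gam b (gam c s).
Proof.
rewrite (clifford_anticomm_swap c x) !(linB (gam_linr _)) !(linZ (gam_linr _)) /=.
rewrite (clifford_anticomm_swap b x) !(linB (gam_linr _)) !(linZ (gam_linr _)) /=.
rewrite (clifford_anticomm_swap a x).
by rewrite opprB !addrA [in LHS]addrAC subrK addrAC.
Qed.

Variables (n : nat) (e et : 'I_n -> E).
Hypothesis frame : dual_frame ip e et.

Section Cubic.
Variable T : E -> E -> E -> A.
Hypotheses (T_scalar : forall u v, scalar (T u v))
  (T_swap23 : forall u v w, T u w v = - T u v w) (T_cycle : forall u v w, T u v w = T v w u).

Definition gamma3 s := ((6 : R)^-1)%:A *: \sum_(i < n) \sum_(j < n) \sum_(k < n)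
  T (e i) (e j) (e k) *: gam (et i) (gam (et j) (gam (et k) s)).

Lemma gamma3Z f s : gamma3 (f *: s) = f *: gamma3 s.
Proof.
rewrite /gamma3 scalerA mulrC -scalerA; congr (_ *: _).
rewrite scaler_sumr; apply: eq_bigr => i _; rewrite scaler_sumr; apply: eq_bigr => j _.
rewrite scaler_sumr; apply: eq_bigr => k _.
by rewrite !(linZ (gam_linr _)) /= !scalerA mulrC.
Qed.

Lemma T_contract u v x (G : S) :
  \sum_(k < n) T u v (e k) *: (ip (et k) x *: G) = T u v x *: G.
Proof.
rewrite -(frame_contract frame x (T_scalar u v)) scaler_suml.
by apply: eq_bigr => k _; rewrite scalerA mulrC.
Qed.

Section Contractions.
Variables (x : E) (G : 'I_n -> 'I_n -> S).

Lemma T_contract_last :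
  \sum_(i < n) \sum_(j < n) \sum_(k < n) T (e i) (e j) (e k) *: (ip (et k) x *: G i j) =
  \sum_(i < n) \sum_(j < n) T x (e i) (e j) *: G i j.
Proof.
apply: eq_bigr => i _; apply: eq_bigr => j _.
by rewrite T_contract (T_cycle (e i)) (T_cycle (e j)).
Qed.

Lemma T_contract_middle :
  \sum_(i < n) \sum_(j < n) \sum_(k < n) T (e i) (e j) (e k) *: (ip (et j) x *: G i k) =
  - \sum_(i < n) \sum_(k < n) T x (e i) (e k) *: G i k.
Proof.
rewrite -sumrN; apply: eq_bigr => i _; rewrite exchange_big -sumrN; apply: eq_bigr => k _.
under eq_bigr do rewrite T_swap23 scaleNr.
by rewrite sumrN T_contract (T_cycle (e i)) (T_cycle (e k)).
Qed.

Lemma T_contract_first :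
  \sum_(i < n) \sum_(j < n) \sum_(k < n) T (e i) (e j) (e k) *: (ip (et i) x *: G j k) =
  \sum_(j < n) \sum_(k < n) T x (e j) (e k) *: G j k.
Proof.
rewrite exchange_big; apply: eq_bigr => j _; rewrite exchange_big; apply: eq_bigr => k _.
under eq_bigr do rewrite T_cycle.
by rewrite T_contract (T_cycle (e j)) (T_cycle (e k)).
Qed.

End Contractions.

Lemma gamma3_anticomm x s : gamma3 (gam x s) + gam x (gamma3 s) =
  \sum_(i < n) \sum_(j < n) T x (e i) (e j) *: gam (et i) (gam (et j) s).
Proof.
pose G i j := gam (et i) (gam (et j) s).
rewrite /gamma3 (linZ (gam_linr x)) /= -scalerDr.
have -> : \sum_(i < n) \sum_(j < n) \sum_(k < n)
      T (e i) (e j) (e k) *: gam (et i) (gam (et j) (gam (et k) (gam x s))) +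
    gam x (\sum_(i < n) \sum_(j < n) \sum_(k < n)
      T (e i) (e j) (e k) *: gam (et i) (gam (et j) (gam (et k) s))) =
    (\sum_(i < n) \sum_(j < n) \sum_(k < n) T (e i) (e j) (e k) *: (ip (et k) x *: G i j)
   - \sum_(i < n) \sum_(j < n) \sum_(k < n) T (e i) (e j) (e k) *: (ip (et j) x *: G i k)
   + \sum_(i < n) \sum_(j < n) \sum_(k < n) T (e i) (e j) (e k) *: (ip (et i) x *: G j k)) *+ 2.
  rewrite -sumrB -big_split -sumrMnl (lin_sum (gam_linr x)) -big_split; apply: eq_bigr => i _ /=.
  rewrite -sumrB -big_split -sumrMnl (lin_sum (gam_linr x)) -big_split; apply: eq_bigr => j _ /=.
  rewrite -sumrB -big_split -sumrMnl (lin_sum (gam_linr x)) -big_split; apply: eq_bigr => k _ /=.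
  rewrite (linZ (gam_linr x)) /= -scalerDr clifford_anticomm3 -!scalerMnl -mulrnBl -mulrnDl.
  by rewrite -scalerMnr scalerDr scalerBr.
(* By antisymmetry the three contractions all equal K: 6 K against the factor 1/6. *)
rewrite T_contract_last T_contract_middle T_contract_first opprK.
set K := \sum_(i < n) \sum_(j < n) _.
by rewrite -[K + K]mulr2n -mulrSr -mulrnA scale_invnK.
Qed.

Lemma gamma3_double_comm x y s :
  scomm false true (scomm true true gamma3 (gam x)) (gam y) s =
  - (gam (\sum_(j < n) T x y (e j) *: et j) s *+ 4).
Proof.
rewrite scomm_even // !scomm_odd !gamma3_anticomm (lin_sum (gam_linr y)) -sumrB.
have -> : \sum_(i < n) (\sum_(j < n) T x (e i) (e j) *: gam (et i) (gam (et j) (gam y s))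
     - gam y (\sum_(j < n) T x (e i) (e j) *: gam (et i) (gam (et j) s))) =
   (\sum_(i < n) \sum_(j < n) T x (e i) (e j) *: (ip (et j) y *: gam (et i) s)
    - \sum_(i < n) \sum_(j < n) T x (e i) (e j) *: (ip (et i) y *: gam (et j) s)) *+ 2.
  rewrite -sumrB -sumrMnl; apply: eq_bigr => i _.
  rewrite (lin_sum (gam_linr y)) -!sumrB -sumrMnl; apply: eq_bigr => j _.
  rewrite (linZ (gam_linr y)) /= -scalerBr clifford_comm2 -!scalerMnl -mulrnBl.
  by rewrite -scalerMnr scalerBr.
have contract_second i : \sum_(j < n) T x (e i) (e j) *: (ip (et j) y *: gam (et i) s) =
    - (T x y (e i) *: gam (et i) s).
  by rewrite T_contract T_swap23 scaleNr.
have contract_first j : \sum_(i < n) T x (e i) (e j) *: (ip (et i) y *: gam (et j) s) =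
    T x y (e j) *: gam (et j) s.
  by under eq_bigr do rewrite T_swap23 scaleNr; rewrite sumrN T_contract T_swap23 scaleNr opprK.
under eq_bigr do rewrite contract_second.
rewrite exchange_big /=; under [X in _ - X]eq_bigr do rewrite contract_first.
rewrite sumrN (lin_sum (gam_linl s)); under [in RHS]eq_bigr do rewrite (linZ (gam_linl s)) /=.
by rewrite -opprD -mulr2n mulNrn -mulrnA.
Qed.

End Cubic.

Section Dirac.
Variables (pi : E -> A -> A) (D : E -> E -> E) (DS : E -> S -> S).
Hypotheses (Dconnection : gen_connection pi ip D) (DSconnection : e_connection pi DS).
Hypothesis compat : compatible gam D DS.
Local Notation dirac := (dirac gam DS e et).

Lemma spin_connection_linl s : linear (DS^~ s).
Proof. by move=> a u v; rewrite (ec_linl DSconnection). Qed.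

Lemma dirac_mul_comm f s :
  dirac (f *: s) - f *: dirac s = ((2 : R)^-1)%:A *: gam (grad pi e et f) s.
Proof.
rewrite /Defs.dirac (scalerA f) (mulrC f) -scalerA -scalerBr; congr (_ *: _).
rewrite scaler_sumr -sumrB /grad (lin_sum (gam_linl s)); apply: eq_bigr => i _.
rewrite (ec_leibniz DSconnection) (linD (gam_linr _)) !(linZ (gam_linr _)) /=.
by rewrite addrK (linZ (gam_linl s)).
Qed.

Lemma dirac_anticomm x s : dirac (gam x s) + gam x (dirac s) =
  ((2 : R)^-1)%:A *: \sum_(i < n) gam (et i) (gam (D (e i) x) s) + DS x s.
Proof.
rewrite /Defs.dirac (linZ (gam_linr x)) (lin_sum (gam_linr x)) /= -scalerDr -big_split /=.
have -> : \sum_(i < n) (gam (et i) (DS (e i) (gam x s)) + gam x (gam (et i) (DS (e i) s))) =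
    \sum_(i < n) gam (et i) (gam (D (e i) x) s) + (\sum_(i < n) ip (et i) x *: DS (e i) s) *+ 2.
  rewrite -sumrMnl -big_split; apply: eq_bigr => i _ /=.
  by rewrite compat (linD (gam_linr _)) -addrA clifford_anticomm -scalerMnl.
by rewrite scalerDr scale_invnK // (frame_contract frame x (spin_connection_linl s)).
Qed.

Lemma dirac_double_comm x y s :
  scomm false true (scomm true true dirac (gam x)) (gam y) s =
  gam (D x y + \sum_(i < n) ip (D (e i) x) y *: et i - D y x) s.
Proof.
rewrite scomm_even // !scomm_odd !dirac_anticomm (linD (gam_linr y)) (linZ (gam_linr y)) /=.
rewrite (lin_sum (gam_linr y)) opprD addrACA -scalerBr -sumrB.
have -> : \sum_(i < n)
      (gam (et i) (gam (D (e i) x) (gam y s)) - gam y (gam (et i) (gam (D (e i) x) s))) =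
    (\sum_(i < n) (ip (D (e i) x) y *: gam (et i) s - ip (et i) y *: gam (D (e i) x) s)) *+ 2.
  rewrite -sumrMnl; apply: eq_bigr => i _.
  by rewrite clifford_comm2 -!scalerMnl -mulrnBl.
rewrite scale_invnK // (compat x y s) addrK sumrB.
have -> : \sum_(i < n) ip (et i) y *: gam (D (e i) x) s = gam (D y x) s.
  have D_gam_lin : linear (fun u => gam (D u x) s).
    by move=> a u v; rewrite (connection_linl Dconnection) (gam_linl s).
  exact: (frame_contract frame y D_gam_lin).
rewrite (linB (gam_linl s)) (linD (gam_linl s)) (lin_sum (gam_linl s)).
under [X in _ = _ + X - _]eq_bigr do rewrite (linZ (gam_linl s)) /=.
by rewrite addrC addrA.
Qed.

End Dirac.

End Clifford.

Section DiracConditions.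
Variables (E S : lmodType A) (pi : E -> A -> A) (br : E -> E -> E) (ip : E -> E -> A).
Variables (gam : E -> S -> S) (D : E -> E -> E) (DS : E -> S -> S) (n : nat) (e et : 'I_n -> E).
Hypotheses (Ecourant : courant pi br ip) (Sclifford : clifford_module ip gam).
Hypotheses (Dconnection : gen_connection pi ip D) (DSconnection : e_connection pi DS).
Hypotheses (compat : compatible gam D DS) (frame : dual_frame ip e et).
Local Notation dslash := (dslash br ip D gam DS e et).
Local Notation gammaT := (gamma3 gam e et (torsion3 br ip D)).
Let ipC := ip_sym Ecourant.
Let ip_lin := ip_scalarl Ecourant.

Lemma dslashE : dslash = fun s => dirac gam DS e et s + ((4 : R)^-1)%:A *: gammaT s.
Proof. by []. Qed.

Lemma dslash_mul_comm f s :
  scomm true false dslash (mulop f) s = ((2 : R)^-1)%:A *: gam (grad pi e et f) s.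
Proof.
rewrite scomm_even // /mulop dslashE (gamma3Z Sclifford).
have -> : ((4 : R)^-1)%:A *: (f *: gammaT s) = f *: (((4 : R)^-1)%:A *: gammaT s).
  by rewrite scalerA [in RHS]scalerA mulrC.
by rewrite scalerDr opprD addrACA subrr addr0 (dirac_mul_comm Sclifford e et DSconnection).
Qed.

Lemma dslash_anchor_condition f x s :
  scomm true true (scomm true false dslash (mulop f)) (gam x) s = pi x f *: s.
Proof.
rewrite scomm_odd !dslash_mul_comm (linZ (gam_linr Sclifford x)) /= -scalerDr.
rewrite (clifford_anticomm ipC ip_lin Sclifford) -scalerMnl scale_invnK //.
by rewrite (ip_grad Ecourant frame).
Qed.

Lemma dslash_bracket_condition x y s :
  scomm false true (scomm true true dslash (gam x)) (gam y) s = gam (br x y) s.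
Proof.
rewrite dslashE (double_scomm_addZ _ _ _ _ (gam_linr Sclifford y) (gam_linr Sclifford x)).
rewrite (dirac_double_comm ipC ip_lin Sclifford frame Dconnection DSconnection compat).
rewrite (gamma3_double_comm ipC ip_lin Sclifford frame (torsion3_scalar Ecourant Dconnection)
  (torsion3_swap23 Ecourant Dconnection) (torsion3_cycle Ecourant Dconnection)).
rewrite scalerN scale_invnK // (torsion3_frame_expand Ecourant frame).
rewrite -(linB (gam_linl Sclifford s)).
by rewrite (addrAC (D x y)) (addrAC (D x y - D y x) (- br x y)) subKr.
Qed.

End DiracConditions.
End CourantDirac.

Theorem lemma7p4 (R : realType) (A : comAlgType R) (E S : lmodType A)
  (pi : E -> A -> A) (br : E -> E -> E) (ip : E -> E -> A)
  (gam : E -> S -> S) (D : E -> E -> E) (DS : E -> S -> S)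
  (n : nat) (e et : 'I_n -> E) :
  courant pi br ip ->
  clifford_module ip gam ->
  gen_connection pi ip D ->
  e_connection pi DS ->
  compatible gam D DS ->
  dual_frame ip e et ->
  (forall (f : A) (x : E) (s : S),
     scomm true true (scomm true false (dslash br ip D gam DS e et) (@mulop _ _ S f))
           (gam x) s = pi x f *: s) /\
  (forall (x1 x2 : E) (s : S),
     scomm false true (scomm true true (dslash br ip D gam DS e et) (gam x1))
           (gam x2) s = gam (br x1 x2) s).
Proof.
move=> Ecourant Sclifford Dconnection DSconnection compat frame; split.
- exact: (dslash_anchor_condition D Ecourant Sclifford DSconnection frame).
- exact: (dslash_bracket_condition Ecourant Sclifford Dconnection DSconnection compat frame).
Qed.
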